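(* Let $(X,\mathbf R)$ be a symmetric association scheme with $D$ classes which is cometric with respect to the ordering $E_0,\dots,E_D$. Fix $x\in X$ and write $E_k^*=E_k^*(x)$. Let $\chi\in V$ be a code and set $\delta^*=\delta^*(\chi)$, $s_x=s_x(\chi)$. Then for every $0\le k\le D$, $E_k^*\chi$ is a relative $(\delta^*-s_x)$-design with respect to $x$; that is, $E_jE_k^*\chi\in\mathbb C E_j\hat x$ for all $1\le j\le \delta^*-s_x$.
   Context: $(X,\mathbf R)$ is a symmetric association scheme with associate matrices $A_0=I,\dots,A_D$, Bose–Mesner algebra $M$, and primitive idempotents $E_0=|X|^{-1}J,E_1,\dots,E_D$. Cometric (Q-polynomial) with respect to $E_0,\dots,E_D$ means that for each $j$, $E_j$ is a polynomial of degree exactly $j$ in $E_1$ with respect to entrywise (Hadamard) multiplication. $V=\mathbb C^X$ with standard basis $\{\hat y\}$ and standard Hermitian inner product. $E_k^*(x)$ is the diagonal matrix with $(E_k^*(x))_{yy}=(A_k)_{xy}$. A code is a vector $\chi\notin E_0V$ with $\chi\notin E_0^*(z)V$ for all $z\in X$. $\delta^*(\chi)=\min\{j\ne0:E_j\chi\ne0\}$, $s_x(\chi)=|\{i\ne0:E_i^*(x)\chi\ne0\}|$. A vector $\psi$ is a relative $t$-design with respect to $x$ if $E_j\psi$ and $E_j\hat x$ are linearly dependent for all $1\le j\le t$ (vacuous if $t\le 0$). *)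

From mathcomp Require Import all_boot all_order all_algebra all_field.
Set Implicit Arguments. Unset Strict Implicit. Unset Printing Implicit Defensive.
Import GRing.Theory Num.Theory.
Local Open Scope ring_scope.

(* The point set X is 'I_n; V = C^X is 'cV[algC]_n; relations/idempotents
   are indexed by 'I_D.+1 (index 0 = the trivial relation / E_0). *)

Section AS.
Variables (n D : nat).
Implicit Types (A E : 'I_D.+1 -> 'M[algC]_n) (M : 'M[algC]_n).

Definition in_BM A M := exists c : 'I_D.+1 -> algC, M = \sum_i c i *: A i.

Definition sym_assoc_scheme A :=
  [/\ A ord0 = 1%:M,
      (forall i a b, A i a b = 0 \/ A i a b = 1) /\ \sum_i A i = const_mx 1,
      (forall i, (A i)^T = A i),
      (forall i, A i != 0)
    & (forall i j, in_BM A (A i *m A j))].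

Definition primitive_idempotent A M :=
  [/\ in_BM A M, M *m M = M, M != 0
    & forall F, in_BM A F -> F *m F = F -> F *m M = 0 \/ F *m M = M].

Definition prim_idempotents A E :=
  [/\ (forall j, primitive_idempotent A (E j)),
      (forall i j, i != j -> E i *m E j = 0),
      \sum_j E j = 1%:M
    & E ord0 = (n%:R)^-1 *: const_mx 1].

Definition hpow M (k : nat) : 'M[algC]_n := \matrix_(a, b) (M a b) ^+ k.

Definition cometric E :=
  forall j : 'I_D.+1, exists p : {poly algC},
    size p = j.+1 /\ E j = \sum_(k < size p) p`_k *: hpow (E (inord 1)) k.

Definition Estar A (x : 'I_n) (k : 'I_D.+1) : 'M[algC]_n := diag_mx (row x (A k)).

Definition hat (y : 'I_n) : 'cV[algC]_n := delta_mx y ord0.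

Definition is_code A E (chi : 'cV[algC]_n) :=
  ~ (exists w, chi = E ord0 *m w) /\
  forall z, ~ (exists w, chi = Estar A z ord0 *m w).

Definition deltastar E (chi : 'cV[algC]_n) : nat :=
  \big[minn/D.+1]_(j < D.+1 | (j != 0%N :> nat) && (E j *m chi != 0)) (j : nat).

Definition sx A (x : 'I_n) (chi : 'cV[algC]_n) : nat :=
  #|[set i : 'I_D.+1 | (i != 0%N :> nat) && (Estar A x i *m chi != 0)]|.

Definition lin_dep (u v : 'cV[algC]_n) :=
  exists a b : algC, ((a != 0) || (b != 0)) /\ a *: u + b *: v = 0.

Definition rel_design E (psi : 'cV[algC]_n) (x : 'I_n) (t : nat) :=
  forall j : 'I_D.+1, (1 <= j)%N -> (j <= t)%N -> lin_dep (E j *m psi) (E j *m hat x).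

End AS.

From mathcomp Require Import all_boot all_order all_algebra all_field.
From mathcomp Require Import ring zify.
Set Implicit Arguments. Unset Strict Implicit. Unset Printing Implicit Defensive.
Import Order.TTheory GRing.Theory Num.Theory Num.Def.
Local Open Scope ring_scope.

(* Let S = {i <> 0 : E_i^* chi <> 0} and s = |S| = s_x(chi). The entries of E_1
   on the classes R_0, ..., R_D are pairwise distinct, so for k in S there is a
   polynomial Q of degree s - 1 with Q = [i == k] on these entries over S;
   applied entrywise to E_1 it gives a matrix in span{E_0, ..., E_(s-1)} whose
   column q at x satisfies E_k^* chi = q o chi - q(x) chi(x) \hat x, where o is
   the entrywise product. Expanding chi = sum_m E_m chi, only m = 0 and
   m >= delta^* contribute: q o E_0 chi is a multiple of q, and E_j q is a
   multiple of E_j \hat x, while for m >= delta^* the term E_j (q o E_m chi)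
   vanishes because the Krein parameter q^j_(i,m) of a cometric scheme is zero
   whenever i + j < m, and here i <= s - 1, j <= delta^* - s. *)

Definition hadmx m k (M N : 'M[algC]_(m, k)) : 'M[algC]_(m, k) :=
  \matrix_(a, b) (M a b * N a b).

Lemma hadmx_suml m k (I : finType) (P : pred I) (F : I -> 'M[algC]_(m, k)) N :
  hadmx (\sum_(i | P i) F i) N = \sum_(i | P i) hadmx (F i) N.
Proof.
apply/matrixP => a b; rewrite mxE !summxE mulr_suml.
by apply: eq_bigr => i _; rewrite mxE.
Qed.

Lemma hadmx_sumr m k (I : finType) (P : pred I) (F : I -> 'M[algC]_(m, k)) M :
  hadmx M (\sum_(i | P i) F i) = \sum_(i | P i) hadmx M (F i).
Proof.
apply/matrixP => a b; rewrite mxE !summxE mulr_sumr.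
by apply: eq_bigr => i _; rewrite mxE.
Qed.

Lemma hadmxZl m k c (M N : 'M[algC]_(m, k)) : hadmx (c *: M) N = c *: hadmx M N.
Proof. by apply/matrixP => a b; rewrite !mxE mulrA. Qed.

Lemma hadmx0r m k (M : 'M[algC]_(m, k)) : hadmx M 0 = 0.
Proof. by apply/matrixP => a b; rewrite !mxE mulr0. Qed.

Lemma sum3C (R : nmodType) (I J K : finType) (F : I -> J -> K -> R) :
  \sum_a \sum_b \sum_c F a b c = \sum_b \sum_c \sum_a F a b c.
Proof. by rewrite exchange_big; apply: eq_bigr => b _; rewrite exchange_big. Qed.

Lemma sum_conj_mul_eq0 (I : finType) (f : I -> algC) :
  \sum_i f i * (f i)^* = 0 -> forall i, f i = 0.
Proof.
move=> /(psumr_eq0P (fun i _ => mul_conjC_ge0 (f i))) f0 i.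
by apply/eqP; rewrite -mul_conjC_eq0 f0.
Qed.

Lemma mul_hatE n (M : 'M[algC]_n) (x y : 'I_n) (c : 'I_1) : (M *m hat x) y c = M y x.
Proof.
rewrite mxE (bigD1 x) //= big1 => [|z ne]; rewrite mxE.
  by rewrite (ord1 c) !eqxx mulr1 addr0.
by rewrite (negbTE ne) mulr0.
Qed.

Lemma lin_dep_scale n (u v : 'cV[algC]_n) c : u = c *: v -> lin_dep u v.
Proof.
by move=> ->; exists 1, (- c); rewrite oner_eq0 scale1r scaleNr addrN.
Qed.

Lemma Estar_mulE n D (A : 'I_D.+1 -> 'M[algC]_n) x k (chi : 'cV[algC]_n) y c :
  (Estar A x k *m chi) y c = A k x y * chi y c.
Proof. by rewrite /Estar mul_diag_mx !mxE. Qed.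

Lemma deltastar_min n D (E : 'I_D.+1 -> 'M[algC]_n) (chi : 'cV[algC]_n) (m : 'I_D.+1) :
  m != 0%N :> nat -> (m < deltastar E chi)%N -> E m *m chi = 0.
Proof.
move=> m0 lt_m; apply/eqP; apply: contraTT lt_m => Em_neq0; rewrite -leqNgt.
have := @bigmin_le_cond _ nat _ D.+1 m
  (fun j : 'I_D.+1 => (j != 0%N :> nat) && (E j *m chi != 0)) val.
by rewrite minEnat m0 Em_neq0; apply.
Qed.

Definition dual_support n D (A : 'I_D.+1 -> 'M[algC]_n) (x : 'I_n) (chi : 'cV[algC]_n) :
  {set 'I_D.+1} := [set i : 'I_D.+1 | (i != 0%N :> nat) && (Estar A x i *m chi != 0)].

Lemma sx_le n D (A : 'I_D.+1 -> 'M[algC]_n) x (chi : 'cV[algC]_n) : (sx A x chi <= D)%N.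
Proof.
have /subset_leq_card : dual_support A x chi \subset [set~ ord0].
  by apply/subsetP => i; rewrite !inE => /andP[].
by rewrite cardsC1 card_ord.
Qed.

Section AssociationScheme.
Variables (n D : nat) (A : 'I_D.+1 -> 'M[algC]_n).
Hypothesis hA : sym_assoc_scheme A.
Implicit Types (M N : 'M[algC]_n).

Lemma A_01 i a b : A i a b = 0 \/ A i a b = 1.
Proof. by case: hA => _ [hA01 _] _ _ _; apply: hA01. Qed.

Lemma A_ge0 i a b : 0 <= A i a b.
Proof. by case: (A_01 i a b) => ->. Qed.

Lemma sum_A_entry a b : \sum_i A i a b = 1.
Proof. by case: hA => _ [_ hJ] _ _ _; rewrite -summxE hJ mxE. Qed.

Lemma A0 : A ord0 = 1%:M.
Proof. by case: hA. Qed.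

Lemma A_tr i : (A i)^T = A i.
Proof. by case: hA. Qed.

Lemma A_neq0 i : A i != 0.
Proof. by case: hA. Qed.

Definition cls a b : 'I_D.+1 := odflt ord0 [pick i | A i a b == 1].

Lemma A_cls a b : A (cls a b) a b = 1.
Proof.
rewrite /cls; case: pickP => [i /eqP //|no_cls] /=.
have : \sum_i A i a b = 0.
  by apply: big1 => i _; case: (A_01 i a b) => // Ai1; move: (no_cls i); rewrite Ai1 eqxx.
by rewrite sum_A_entry => /eqP; rewrite oner_eq0.
Qed.

Lemma A_entry i a b : A i a b = (i == cls a b)%:R.
Proof.
case: eqP => [->|/eqP ne]; first exact: A_cls.
have := sum_A_entry a b; rewrite (bigD1 (cls a b)) //= A_cls => /(canRL (addKr 1)).
by rewrite addNr => /(psumr_eq0P (fun j _ => A_ge0 j a b)); apply.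
Qed.

Lemma clsC a b : cls a b = cls b a.
Proof.
apply/eqP; have := A_cls a b; rewrite -A_tr mxE A_entry.
by case: eqP => // _ /eqP; rewrite eq_sym oner_eq0.
Qed.

Lemma clsxx a : cls a a = ord0.
Proof.
apply/eqP; rewrite eq_sym; have := A_entry ord0 a a; rewrite A0 mxE eqxx.
by case: eqP => // _ /eqP; rewrite oner_eq0.
Qed.

Lemma cls_eq0 a b : cls a b = ord0 -> a = b.
Proof.
move=> h0; have := A_cls a b; rewrite h0 A0 mxE.
by case: eqP => // _ /eqP; rewrite eq_sym oner_eq0.
Qed.

Lemma cls_surj r : exists a b, cls a b = r.
Proof.
have [[a b] /= Ar_neq0|Ar0] := pickP (fun p : 'I_n * 'I_n => A r p.1 p.2 != 0).
  exists a, b; move: Ar_neq0; rewrite A_entry.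
  by case: (eqVneq r (cls a b)) => [->|_]; rewrite ?eqxx.
case/eqP: (A_neq0 r); apply/matrixP => a b; rewrite mxE.
by move: (Ar0 (a, b)) => /= /negbFE /eqP.
Qed.

Lemma sum_scale_A_entry (c : 'I_D.+1 -> algC) a b :
  (\sum_i c i *: A i) a b = c (cls a b).
Proof.
rewrite summxE (bigD1 (cls a b)) //= big1 => [|i ne]; rewrite mxE A_entry.
  by rewrite eqxx mulr1 addr0.
by rewrite (negbTE ne) mulr0.
Qed.

Lemma in_BM_cls M : in_BM A M -> forall a b a' b', cls a b = cls a' b' -> M a b = M a' b'.
Proof. by case=> c -> a b a' b' h; rewrite !sum_scale_A_entry h. Qed.

Lemma in_BM_of_cls M :
  (forall a b a' b', cls a b = cls a' b' -> M a b = M a' b') -> in_BM A M.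
Proof.
move=> Mcls.
exists (fun r => if [pick p | cls p.1 p.2 == r] is Some p then M p.1 p.2 else 0).
apply/matrixP => a b; rewrite sum_scale_A_entry.
case: pickP => [p /eqP hp|no_p]; first by apply: Mcls; rewrite hp.
by move: (no_p (a, b)); rewrite eqxx.
Qed.

Lemma in_BM_tr M : in_BM A M -> M^T = M.
Proof.
by move=> BM; apply/matrixP => a b; rewrite mxE; apply: (in_BM_cls BM); rewrite clsC.
Qed.

Lemma in_BMM M N : in_BM A M -> in_BM A N -> in_BM A (M *m N).
Proof.
have BM0 : in_BM A 0 by apply: in_BM_of_cls => *; rewrite !mxE.
have BMD P Q : in_BM A P -> in_BM A Q -> in_BM A (P + Q).
  move=> BP BQ; apply: in_BM_of_cls => a b a' b' h.
  by rewrite !mxE (in_BM_cls BP h) (in_BM_cls BQ h).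
have BMZ a P : in_BM A P -> in_BM A (a *: P).
  by move=> BP; apply: in_BM_of_cls => a1 b1 a2 b2 h; rewrite !mxE (in_BM_cls BP h).
case=> c -> [d ->]; rewrite mulmx_suml.
apply: (big_ind (in_BM A)) => // i _; rewrite mulmx_sumr.
apply: (big_ind (in_BM A)) => // j _; rewrite -scalemxAl -scalemxAr.
by do 2!apply: (BMZ); case: hA => _ _ _ _; apply.
Qed.

Lemma in_BM_comm M N : in_BM A M -> in_BM A N -> M *m N = N *m M.
Proof.
move=> BM BN; rewrite -(in_BM_tr (in_BMM BM BN)) trmx_mul.
by rewrite (in_BM_tr BM) (in_BM_tr BN).
Qed.

End AssociationScheme.

Section Idempotents.
Variables (n D : nat) (A E : 'I_D.+1 -> 'M[algC]_n).
Hypotheses (hA : sym_assoc_scheme A) (hE : prim_idempotents A E).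

Lemma E_BM j : in_BM A (E j).
Proof. by case: hE => hprim _ _ _; case: (hprim j). Qed.

Lemma E_idem j : E j *m E j = E j.
Proof. by case: hE => hprim _ _ _; case: (hprim j). Qed.

Lemma E_neq0 j : E j != 0.
Proof. by case: hE => hprim _ _ _; case: (hprim j). Qed.

Lemma E_prim j F : in_BM A F -> F *m F = F -> F *m E j = 0 \/ F *m E j = E j.
Proof. by case: hE => hprim _ _ _; case: (hprim j) => _ _ _; apply. Qed.

Lemma E_orth i j : i != j -> E i *m E j = 0.
Proof. by case: hE => _ horth _ _; apply: horth. Qed.

Lemma E_sum : \sum_j E j = 1%:M.
Proof. by case: hE. Qed.

Lemma E0 : E ord0 = (n%:R)^-1 *: const_mx 1.
Proof. by case: hE. Qed.

Lemma E_tr j : (E j)^T = E j.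
Proof. exact: (in_BM_tr hA (E_BM j)). Qed.

Lemma E_entryC j a b : E j a b = E j b a.
Proof. by rewrite -{1}E_tr mxE. Qed.

Lemma E_mul_sum (c : 'I_D.+1 -> algC) j : E j *m (\sum_i c i *: E i) = c j *: E j.
Proof.
rewrite mulmx_sumr (bigD1 j) //= big1 => [|i ne]; rewrite -scalemxAr.
  by rewrite E_idem addr0.
by rewrite E_orth ?scaler0 // eq_sym.
Qed.

Lemma sum_mul_E (c : 'I_D.+1 -> algC) j : (\sum_i c i *: E i) *m E j = c j *: E j.
Proof.
rewrite mulmx_suml (bigD1 j) //= big1 => [|i ne]; rewrite -scalemxAl.
  by rewrite E_idem addr0.
by rewrite E_orth ?scaler0.
Qed.

Lemma E_free (c : 'I_D.+1 -> algC) : \sum_i c i *: E i = 0 -> forall j, c j = 0.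
Proof.
move=> c0 j; have /eqP := E_mul_sum c j; rewrite c0 mulmx0 eq_sym scaler_eq0.
by rewrite (negbTE (E_neq0 j)) orbF => /eqP.
Qed.

(* An idempotent G of the Bose-Mesner algebra is killed by E_j or absorbs it;
   for G the entrywise conjugate of E_j the first case would give
   tr (G E_j^T) = sum |E_j a b|^2 = 0. *)
Lemma E_conj j : map_mx conjC (E j) = E j.
Proof.
set G := map_mx conjC (E j).
have BG : in_BM A G.
  apply: (in_BM_of_cls hA) => a b a' b' h; rewrite !mxE.
  by rewrite (in_BM_cls hA (E_BM j) h).
have GE : G *m E j = E j.
  have GG : G *m G = G by rewrite -map_mxM E_idem.
  have [GE0|//] := E_prim j BG GG.
  case/eqP: (E_neq0 j); apply/matrixP => a b; rewrite mxE.
  apply: (sum_conj_mul_eq0 (f := fun p : 'I_n * 'I_n => E j p.1 p.2) _ (a, b)).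
  rewrite -(pair_bigA _ (fun a' b' => E j a' b' * (E j a' b')^* )) /=.
  rewrite -[RHS](@mxtrace0 _ n) -GE0 -[in RHS]E_tr.
  by apply: eq_bigr => a' _; rewrite mxE; apply: eq_bigr => b' _; rewrite !mxE mulrC.
have EG : E j *m G = G.
  have := congr1 (map_mx conjC) GE; rewrite map_mxM.
  suff -> : map_mx conjC G = E j by [].
  by apply/matrixP => a b; rewrite !mxE conjCK.
by rewrite -GE (in_BM_comm hA BG (E_BM j)) EG.
Qed.

Lemma E_entry_conj j a b : (E j a b)^* = E j a b.
Proof. by rewrite -{2}(E_conj j) mxE. Qed.

Lemma hadmx_E0 (v w : 'cV[algC]_n) : hadmx v (E ord0 *m w) = ((n%:R)^-1 * \sum_a w a 0) *: v.
Proof.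
apply/matrixP => y c; rewrite (ord1 c) !mxE E0 mulrC mulr_sumr.
by congr (_ * _); apply: eq_bigr => a _; rewrite !mxE mulr1.
Qed.

End Idempotents.

Section KreinVanishing.
Variables (n D : nat) (A E : 'I_D.+1 -> 'M[algC]_n).
Hypotheses (hA : sym_assoc_scheme A) (hE : prim_idempotents A E).

(* Up to the factor m_l / |X|, the Krein parameter q^l_(i,j) of the scheme. *)
Definition kreinT (i j l : 'I_D.+1) : algC :=
  \sum_w \sum_w' E i w w' * E j w w' * E l w w'.

Lemma kreinTC i j l : kreinT i j l = kreinT i l j.
Proof. by apply: eq_bigr => w _; apply: eq_bigr => w' _; rewrite mulrAC. Qed.

Lemma sum_E_mul_row j w w' : \sum_y E j w y * E j w' y = E j w w'.
Proof. by rewrite -{3}(E_idem hE) mxE; apply: eq_bigr => y _; rewrite (E_entryC hA hE j w' y). Qed.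

(* The entry (v, 0) of E_l (E_i \hat y o E_j \hat z). *)
Let kreinrow i j l y z v := \sum_w E l v w * (E i w y * E j w z).

Lemma sum_kreinrow_sqr i j l :
  \sum_y \sum_z \sum_v kreinrow i j l y z v * kreinrow i j l y z v = kreinT i j l.
Proof.
have sqr y z : \sum_v kreinrow i j l y z v * kreinrow i j l y z v =
    \sum_w \sum_w' E l w w' * ((E i w y * E i w' y) * (E j w z * E j w' z)).
  transitivity (\sum_v \sum_w \sum_w'
      (E l v w * E l v w') * ((E i w y * E i w' y) * (E j w z * E j w' z))).
    apply: eq_bigr => v _; rewrite mulr_suml; apply: eq_bigr => w _.
    by rewrite mulr_sumr; apply: eq_bigr => w' _; ring.
  rewrite sum3C; apply: eq_bigr => w _; apply: eq_bigr => w' _.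
  rewrite -mulr_suml; congr (_ * _).
  by rewrite -(sum_E_mul_row l w w'); apply: eq_bigr => v _; rewrite !(E_entryC hA hE l v).
under eq_bigr => y _ do under eq_bigr => z _ do rewrite sqr.
under eq_bigr => y _ do rewrite sum3C.
rewrite sum3C; apply: eq_bigr => w _; apply: eq_bigr => w' _.
transitivity (\sum_y E l w w' * (E i w y * E i w' y) * \sum_z E j w z * E j w' z).
  by apply: eq_bigr => y _; rewrite mulr_sumr; apply: eq_bigr => z _; ring.
by rewrite -mulr_suml -mulr_sumr !sum_E_mul_row; ring.
Qed.

(* kreinrow is real, so kreinT is a sum of squares of absolute values. *)
Lemma kreinrow_eq0 i j l : kreinT i j l = 0 -> forall y z v, kreinrow i j l y z v = 0.
Proof.
move=> T0 y z v.
pose f (p : 'I_n * ('I_n * 'I_n)) := kreinrow i j l p.1 p.2.1 p.2.2.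
apply: (sum_conj_mul_eq0 (f := f) _ (y, (z, v))).
pose g y' z' v' := kreinrow i j l y' z' v' * kreinrow i j l y' z' v'.
rewrite -{}[RHS]T0 -sum_kreinrow_sqr -/g.
under [RHS]eq_bigr => y' _ do rewrite (pair_bigA _ (g y')).
rewrite (pair_bigA _ (fun y' q => g y' q.1 q.2)).
apply: eq_bigr => -[y' [z' v']] _; rewrite /f /g /kreinrow /= rmorph_sum.
congr (_ * _); apply: eq_bigr => w _.
by rewrite !rmorphM /= !(E_entry_conj hA hE).
Qed.

Lemma E_mul_hadmx_eq0 i j l (a b : 'cV[algC]_n) :
  kreinT i j l = 0 -> E l *m hadmx (E i *m a) (E j *m b) = 0.
Proof.
move=> T0; apply/matrixP => v c; rewrite !mxE.
transitivity (\sum_y \sum_z a y c * b z c * kreinrow i j l y z v); last first.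
  by apply: big1 => y _; apply: big1 => z _; rewrite kreinrow_eq0 ?mulr0.
transitivity (\sum_w \sum_y \sum_z a y c * b z c * (E l v w * (E i w y * E j w z))).
  apply: eq_bigr => w _; rewrite !mxE mulr_suml mulr_sumr; apply: eq_bigr => y _.
  by rewrite !mulr_sumr; apply: eq_bigr => z _; ring.
by rewrite sum3C; apply: eq_bigr => y _; apply: eq_bigr => z _; rewrite mulr_sumr.
Qed.

End KreinVanishing.

Section Cometric.
Variables (n D : nat) (A E : 'I_D.+1 -> 'M[algC]_n).
Hypotheses (hA : sym_assoc_scheme A) (hE : prim_idempotents A E) (hC : cometric E).

Local Notation E1 := (E (inord 1)).

Definition hpoly (Q : {poly algC}) : 'M[algC]_n := \matrix_(a, b) Q.[E1 a b].

Lemma hpolyE Q : hpoly Q = \sum_(d < size Q) Q`_d *: hpow E1 d.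
Proof.
apply/matrixP => a b; rewrite summxE mxE horner_coef.
by apply: eq_bigr => d _; rewrite !mxE.
Qed.

Lemma E_hpoly (j : 'I_D.+1) : exists p : {poly algC}, size p = j.+1 /\ E j = hpoly p.
Proof. by have [p [sp Ep]] := hC j; exists p; rewrite hpolyE. Qed.

Definition Espan (k : nat) (M : 'M[algC]_n) :=
  exists c : 'I_D.+1 -> algC, M = \sum_i c i *: E i /\ forall i : 'I_D.+1, (k < i)%N -> c i = 0.

Lemma Espan0 k : Espan k 0.
Proof. by exists (fun=> 0); split; rewrite // big1 // => i _; rewrite scale0r. Qed.

Lemma EspanD k M N : Espan k M -> Espan k N -> Espan k (M + N).
Proof.
case=> c [-> c0] [d [-> d0]]; exists (fun i => c i + d i); split.
  by rewrite -big_split; apply: eq_bigr => i _; rewrite scalerDl.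
by move=> i lt_ki; rewrite c0 // d0 // addr0.
Qed.

Lemma EspanZ k a M : Espan k M -> Espan k (a *: M).
Proof.
case=> c [-> c0]; exists (fun i => a * c i); split.
  by rewrite scaler_sumr; apply: eq_bigr => i _; rewrite scalerA.
by move=> i lt_ki; rewrite c0 // mulr0.
Qed.

Lemma Espan_sum k (I : finType) (P : pred I) (F : I -> 'M[algC]_n) :
  (forall i, P i -> Espan k (F i)) -> Espan k (\sum_(i | P i) F i).
Proof. by move=> FS; apply: big_ind => //; [exact: Espan0 | exact: EspanD]. Qed.

Lemma Espan_le k k' M : (k <= k')%N -> Espan k M -> Espan k' M.
Proof. by move=> le_kk' [c [-> c0]]; exists c; split=> // i /(leq_ltn_trans le_kk') /c0. Qed.

Lemma E_Espan k (i : 'I_D.+1) : (i <= k)%N -> Espan k (E i).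
Proof.
move=> le_ik; exists (fun j => (j == i)%:R); split.
  by rewrite (bigD1 i) //= eqxx scale1r big1 ?addr0 // => j /negbTE ->; rewrite scale0r.
by move=> j lt_kj; case: eqP => // ji; move: lt_kj; rewrite ji ltnNge le_ik.
Qed.

(* E_k is a Hadamard polynomial of degree exactly k in E_1: solve for its
   leading term and induct. *)
Lemma hpow_Espan k : (k <= D)%N -> Espan k (hpow E1 k).
Proof.
elim/ltn_ind: k => k IH le_kD.
have [p [sp Ep]] := hC (inord k); rewrite inordK // in sp.
have pk_neq0 : p`_k != 0.
  have : lead_coef p != 0 by rewrite lead_coef_eq0 -size_poly_eq0 sp.
  by rewrite lead_coefE sp.
move: Ep; rewrite sp big_ord_recr /= => Ep.
have -> : hpow E1 k = (p`_k)^-1 *: (E (inord k) - \sum_(d < k) p`_d *: hpow E1 d).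
  by rewrite Ep addrAC subrr add0r scalerA mulVf // scale1r.
apply/EspanZ/EspanD; first by apply: E_Espan; rewrite inordK.
rewrite -scaleN1r; apply/EspanZ/Espan_sum => d _; apply/EspanZ.
apply: (Espan_le (ltnW (ltn_ord d))); apply: IH => //.
exact: leq_trans (ltnW (ltn_ord d)) le_kD.
Qed.

Lemma hpoly_Espan (Q : {poly algC}) k : (size Q <= k.+1)%N -> (k <= D)%N -> Espan k (hpoly Q).
Proof.
move=> sQ le_kD; rewrite hpolyE; apply: Espan_sum => d _; apply: EspanZ.
have le_dk : (d <= k)%N by rewrite -ltnS; apply: leq_trans sQ.
exact: (Espan_le le_dk (hpow_Espan (leq_trans le_dk le_kD))).
Qed.

Lemma Espan_mulE k M (l : 'I_D.+1) : Espan k M -> (k < l)%N -> M *m E l = 0.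
Proof. by case=> c [-> c0] lt_kl; rewrite (sum_mul_E hE) c0 ?scale0r. Qed.

Lemma E_mul_Espan k M (j : 'I_D.+1) : Espan k M -> exists c, E j *m M = c *: E j.
Proof. by case=> c [-> _]; exists (c j); rewrite (E_mul_sum hE). Qed.

Lemma kreinT_eq0 (i j l : 'I_D.+1) : (i + j < l)%N -> kreinT E i j l = 0.
Proof.
move=> lt_ijl.
have [p [sp Ep]] := E_hpoly i; have [p' [sp' Ep']] := E_hpoly j.
have EEl : hadmx (E i) (E j) *m E l = 0.
  have -> : hadmx (E i) (E j) = hpoly (p * p').
    by apply/matrixP => a b; rewrite Ep Ep' !mxE hornerM.
  apply: (Espan_mulE _ lt_ijl); apply: hpoly_Espan.
    by apply: leq_trans (size_polyMleq _ _) _; rewrite sp sp' addSn addnS.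
  by rewrite -ltnS; apply: ltn_trans lt_ijl _.
have := congr1 mxtrace EEl; rewrite mxtrace0 /mxtrace => <-.
apply: eq_bigr => w _; rewrite mxE; apply: eq_bigr => w' _.
by rewrite mxE (E_entryC hA hE l w' w).
Qed.

(* Eval (inord 1) r is the dual eigenvalue theta^*_r of the paper, divided by |X|. *)
Definition Eval (j r : 'I_D.+1) : algC :=
  if [pick p | cls A p.1 p.2 == r] is Some p then E j p.1 p.2 else 0.

Lemma EvalE j a b : E j a b = Eval j (cls A a b).
Proof.
rewrite /Eval; case: pickP => [p /eqP hp|no_p]; last by move: (no_p (a, b)); rewrite eqxx.
by apply: (in_BM_cls hA (E_BM hE j)); rewrite hp.
Qed.

Lemma Eval_hpoly (j : 'I_D.+1) : exists p : {poly algC}, forall r, Eval j r = p.[Eval (inord 1) r].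
Proof.
have [p [_ Ep]] := E_hpoly j; exists p => r.
by have [a [b <-]] := cls_surj hA r; rewrite -!EvalE Ep mxE.
Qed.

(* If two classes had the same E_1-value they would have the same value under
   every E_j, so the matrix (Eval j r)_(j, r) would be singular and some
   nontrivial combination of the E_j would vanish. *)
Lemma Eval1_inj r r' : r != r' -> Eval (inord 1) r != Eval (inord 1) r'.
Proof.
move=> neq_rr'; apply/negP => /eqP Eval1_eq.
have Eval_eq j : Eval j r = Eval j r' by have [p Ep] := Eval_hpoly j; rewrite !Ep Eval1_eq.
pose C := \matrix_(j, r0) Eval j r0.
have /det0P [d d_neq0 dC0] : \det C == 0.
  rewrite -det_tr; apply/eqP; apply: (determinant_alternate neq_rr') => j.
  by rewrite !mxE Eval_eq.
have sum_dE0 : \sum_j d 0 j *: E j = 0.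
  apply/matrixP => a b; rewrite summxE [RHS]mxE.
  transitivity ((d *m C) 0 (cls A a b)); last by rewrite dC0 mxE.
  by rewrite mxE; apply: eq_bigr => j _; rewrite !mxE EvalE.
case/eqP: d_neq0; apply/matrixP => z j; rewrite (ord1 z) mxE.
exact: (E_free hE sum_dE0).
Qed.

Lemma lagrange_Eval1 (S : {set 'I_D.+1}) (k : 'I_D.+1) : k \in S ->
  exists Q : {poly algC}, size Q = #|S| /\
    forall i, i \in S -> Q.[Eval (inord 1) i] = (i == k)%:R.
Proof.
move=> kS.
pose P := \prod_(i <- enum (S :\ k)) ('X - (Eval (inord 1) i)%:P).
have sP : size P = #|S| by rewrite size_prod_XsubC -cardE (cardsD1 k S) kS.
have P0 i : i \in S -> i != k -> P.[Eval (inord 1) i] = 0.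
  move=> iS ik; rewrite horner_prod (big_rem i) /=; last by rewrite mem_enum !inE ik.
  by rewrite hornerXsubC subrr mul0r.
have Pk_neq0 : P.[Eval (inord 1) k] != 0.
  rewrite horner_prod prodf_seq_neq0; apply/allP => i; rewrite mem_enum !inE.
  by case/andP => ik _; rewrite hornerXsubC subr_eq0 Eval1_inj // eq_sym.
exists ((P.[Eval (inord 1) k])^-1 *: P); split; first by rewrite size_scale ?invr_eq0.
move=> i iS; rewrite hornerZ; case: (eqVneq i k) => [->|ik]; first by rewrite mulVf.
by rewrite (P0 i) // mulr0.
Qed.

End Cometric.

Section RelativeDesign.
Variables (n D : nat) (A E : 'I_D.+1 -> 'M[algC]_n).
Hypotheses (hA : sym_assoc_scheme A) (hE : prim_idempotents A E) (hC : cometric E).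
Variables (x : 'I_n) (chi : 'cV[algC]_n).

Lemma Estar0_mul : Estar A x ord0 *m chi = chi x 0 *: hat x.
Proof.
apply/matrixP => y c; rewrite Estar_mulE (A0 hA) !mxE (ord1 c).
by case: (eqVneq x y) => [<-|_]; rewrite ?eqxx ?mul1r ?mulr1 ?mul0r ?mulr0.
Qed.

(* Off x, multiplying entrywise by q scales chi(y) by Q at the E_1-value of the
   class of (x, y), which is 1 on the class k and 0 on the other classes meeting
   the support of chi. *)
Lemma Estar_mul_hadmx (k : 'I_D.+1) (Q : {poly algC}) : k != ord0 ->
  (forall i, i \in dual_support A x chi -> Q.[Eval A E (inord 1) i] = (i == k)%:R) ->
  let q := hpoly E Q *m hat x in
  Estar A x k *m chi = hadmx q chi - (q x 0 * chi x 0) *: hat x.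
Proof.
move=> k0 hQ q; have qE y : q y 0 = Q.[E (inord 1) y x] by rewrite mul_hatE mxE.
clearbody q; apply/matrixP => y c; rewrite (ord1 c) Estar_mulE !mxE.
case: (eqVneq y x) => [->|yx].
  by rewrite (A_entry hA) (clsxx hA) (negbTE k0) !eqxx mul0r mulr1 subrr.
rewrite /= mulr0 subr0.
have [->|chi_y] := eqVneq (chi y 0) 0; first by rewrite !mulr0.
have cls_S : cls A x y \in dual_support A x chi.
  rewrite inE; apply/andP; split.
    by apply: contra_neq yx => cls0; apply/esym/(cls_eq0 hA)/val_inj.
  apply: contra_neq chi_y => /matrixP /(_ y 0).
  by rewrite Estar_mulE (A_cls hA) mul1r mxE.
by rewrite qE (EvalE hA hE) (clsC hA) hQ // (A_entry hA) eq_sym mulrC.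
Qed.

Lemma E_mul_hadmx_hpoly (Q : {poly algC}) s (j : 'I_D.+1) :
  Espan E s (hpoly E Q) -> (s + j < deltastar E chi)%N ->
  exists c, E j *m hadmx (hpoly E Q *m hat x) chi = c *: (E j *m hat x).
Proof.
move=> QS lt_sj.
have -> : chi = \sum_m E m *m chi by rewrite -mulmx_suml (E_sum hE) mul1mx.
rewrite hadmx_sumr mulmx_sumr (bigD1 ord0) //= big1 ?addr0 => [|m m0]; last first.
  have [lt_m|le_m] := ltnP m (deltastar E chi).
    by rewrite (deltastar_min m0 lt_m) hadmx0r mulmx0.
  have [b [-> b0]] := QS; rewrite mulmx_suml hadmx_suml mulmx_sumr big1 // => i _.
  rewrite -scalemxAl hadmxZl -scalemxAr.
  have [le_is|lt_si] := leqP i s; last by rewrite b0 // scale0r.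
  rewrite (E_mul_hadmx_eq0 hA hE) ?scaler0 // (kreinTC E) (kreinT_eq0 hA hE hC) //.
  lia.
rewrite (hadmx_E0 hE).
have [c Ec] := E_mul_Espan hE j QS.
by eexists; rewrite -scalemxAr mulmxA Ec -scalemxAl scalerA.
Qed.

End RelativeDesign.

Theorem theorem4p3 (n D : nat) (A E : 'I_D.+1 -> 'M[algC]_n) (x : 'I_n)
    (chi : 'cV[algC]_n) :
  sym_assoc_scheme A -> prim_idempotents A E -> cometric E -> is_code A E chi ->
  forall k : 'I_D.+1,
    rel_design E (Estar A x k *m chi) x (deltastar E chi - sx A x chi).
Proof.
move=> hA hE hC _ k j le1j le_jt.
suff [c Ec] : exists c, E j *m (Estar A x k *m chi) = c *: (E j *m hat x).
  exact: lin_dep_scale Ec.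
have [->|k0] := eqVneq k ord0.
  by exists (chi x 0); rewrite (Estar0_mul hA) scalemxAr.
have [->|Ek_neq0] := eqVneq (Estar A x k *m chi) 0.
  by exists 0; rewrite mulmx0 scale0r.
set S := dual_support A x chi.
have kS : k \in S by rewrite inE k0 Ek_neq0.
have S_gt0 : (0 < #|S|)%N by apply/card_gt0P; exists k.
have le_SD : (#|S| <= D)%N := sx_le A x chi.
have [Q [sQ hQ]] := lagrange_Eval1 hA hE hC kS.
have QS : Espan E #|S|.-1 (hpoly E Q).
  by apply: (hpoly_Espan hC); rewrite ?sQ ?prednK //; apply: leq_trans (leq_pred _) le_SD.
have lt_Sj : (#|S|.-1 + j < deltastar E chi)%N.
  move: le_jt S_gt0; rewrite -[sx A x chi]/#|S|.
  by move: #|S| (deltastar E chi) => s ds; lia.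
have [c Ec] := E_mul_hadmx_hpoly hA hE hC x QS lt_Sj.
rewrite (Estar_mul_hadmx hA hE k0 hQ) mulmxBr -scalemxAr Ec -scalerBl.
by eexists.
Qed.
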